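(* Let $T$ be a $\pi$-increasing tree, let $V_1\subsetneq V(T)$ be a nonempty set which is a union of blocks of $\pi$, and let $v_1\in V_1$. Then $T$ can be written as $T=\mathrm{spl}(T_1,v_1;T_2,v_2)$ for some $\pi$-increasing trees $T_1$, $T_2$ with vertex-sets $V_1$ and $V_2=V(T)\setminus V_1$ respectively and some vertex $v_2\in V_2$, if and only if $V_1=\bigcup_{i\in I}\pi_i$ where $\{\pi_i: i\in I\}$ is a union of vertex-sets of connected components of $G_{v_1}(T)$. In this case, $T_1$, $T_2$ and $v_2$ are unique.
   Context: Standing assumptions: $r\ge2$ and $\pi$ is a set partition of $\{1,\dots,r\}$ having $\{1\}$ as a block; its blocks are $\pi_i$ with maxima $\mu_i$; $\pi^x$ denotes the block containing $x$. An unordered increasing tree is a rooted tree on distinct positive integers, sons unordered, each son larger than its father. A $\pi$-increasing tree is an unordered increasing tree $T$ whose vertex-set is a union of blocks of $\pi$ and such that for any two elements $i<j$ of a same block of $\pi$ contained in $V(T)$, $i$ is an ancestor of $j$ in $T$. $v$-decomposition: for a vertex $v$ of $T$ with chain $a_1<\dots<a_\ell=v$ from the root to $v$, removing the chain edges leaves components $T^{(a_j)}$ rooted at $a_j$. Splice: for unordered increasing trees $T_1,T_2$ with disjoint vertex-sets and $v_1\in V(T_1)$, $v_2\in V(T_2)$, $v_1>v_2$, $\mathrm{spl}(T_1,v_1;T_2,v_2)$ is the tree on $V(T_1)\cup V(T_2)$ obtained by merging the root-to-$v_1$ chain of $T_1$ and the root-to-$v_2$ chain of $T_2$ into one increasing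 chain (ending at $v_1$) and attaching at each chain vertex its component from the $v_1$-decomposition of $T_1$ or the $v_2$-decomposition of $T_2$. $v$-dependence graph $G_v(T)$: directed graph on the blocks of $\pi$ contained in $V(T)$; for each such block $\pi_i$ whose maximum $\mu_i$ is not on the chain $a_1,\dots,a_\ell$, $\mu_i$ is a non-root vertex of a unique $T^{(a_j)}$ and there is an edge (possibly a loop) $\pi_i\to\pi^{a_j}$; no other edges. Connected components are taken ignoring directions. *)

From mathcomp Require Import all_boot.
Set Implicit Arguments. Unset Strict Implicit. Unset Printing Implicit Defensive.

(* Vertices live in 'I_n (in the theorem n = r.+1, so that labels 1..r are
   available; 0 is excluded from vertex sets).
   A tree is a pair (vertex set, parent map); the parent map sends every
   non-root vertex to Some parent and everything else (root, non-vertices)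
   to None, so Leibniz equality of pairs is equality of rooted trees. *)
Section Defs.
Variable n : nat.

Definition tree := ({set 'I_n} * {ffun 'I_n -> option 'I_n})%type.
Definition verts (T : tree) : {set 'I_n} := T.1.
Definition par (T : tree) (x : 'I_n) : option 'I_n := T.2 x.

Definition is_itree (T : tree) : Prop :=
  [/\ verts T != set0,
      (forall v, v \in verts T -> 0 < v),
      (forall v u, par T v = Some u -> [/\ v \in verts T, u \in verts T & u < v])
    & (forall v w, v \in verts T -> w \in verts T ->
         par T v = None -> par T w = None -> v = w)].

Definition anc (T : tree) (a x : 'I_n) : bool :=
  connect (fun y z => par T y == Some z) x a.

Definition chain (T : tree) (v : 'I_n) : {set 'I_n} := [set a | anc T a v].

Definition omax (S : {set 'I_n}) : option 'I_n :=
  [pick y in S | [forall z in S, z <= y]].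

(* root a_j of the component T^(a_j) of the v-decomposition containing x:
   the deepest chain vertex that is an ancestor of x *)
Definition chainroot (T : tree) (v x : 'I_n) : 'I_n :=
  odflt x (omax [set a | anc T a x && anc T a v]).

Definition union_of_blocks (P : {set {set 'I_n}}) (U : {set 'I_n}) : Prop :=
  exists S : {set {set 'I_n}}, S \subset P /\ U = cover S.

Definition pi_increasing (P : {set {set 'I_n}}) (T : tree) : Prop :=
  [/\ is_itree T, union_of_blocks P (verts T)
    & forall B, B \in P -> B \subset verts T ->
        forall i j, i \in B -> j \in B -> i < j -> anc T i j].

(* spl(T1,v1;T2,v2): merge the two chains into one increasing chain, keep all
   other parent links (i.e. the components of the decompositions). *)
Definition pred_in (C : {set 'I_n}) (x : 'I_n) : option 'I_n :=
  omax [set y in C | y < x].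

Definition splice (T1 : tree) (v1 : 'I_n) (T2 : tree) (v2 : 'I_n) : tree :=
  let C := chain T1 v1 :|: chain T2 v2 in
  (verts T1 :|: verts T2,
   [ffun x => if x \in C then pred_in C x
              else if x \in verts T1 then par T1 x else par T2 x]).

Definition blocks_in (P : {set {set 'I_n}}) (U : {set 'I_n}) : {set {set 'I_n}} :=
  [set B in P | B \subset U].

Definition dep_edge (P : {set {set 'I_n}}) (T : tree) (v : 'I_n)
    (B B' : {set 'I_n}) : bool :=
  [&& B \in blocks_in P (verts T), B' \in blocks_in P (verts T) &
      if omax B is Some m then
        (m \notin chain T v) && (B' == pblock P (chainroot T v m))
      else false].

Definition dep_uedge (P : {set {set 'I_n}}) (T : tree) (v : 'I_n) : rel {set 'I_n} :=
  fun B B' => dep_edge P T v B B' || dep_edge P T v B' B.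

Definition union_of_components (P : {set {set 'I_n}}) (T : tree) (v : 'I_n)
    (S : {set {set 'I_n}}) : Prop :=
  S \subset blocks_in P (verts T) /\
  (forall B B', B \in S -> connect (dep_uedge P T v) B B' -> B' \in S).

(* T = spl(T1,v1;T2,v2) with T1, T2 pi-increasing on V1 and V(T)\V1, v2 in V2,
   v1 > v2 (required for spl to be defined) *)
Definition spl_decomp (P : {set {set 'I_n}}) (T : tree) (V1 : {set 'I_n})
    (v1 : 'I_n) (T1 T2 : tree) (v2 : 'I_n) : Prop :=
  [/\ pi_increasing P T1 /\ pi_increasing P T2,
      verts T1 = V1 /\ verts T2 = verts T :\: V1,
      v2 \in verts T2, v2 < v1 & T = splice T1 v1 T2 v2].

End Defs.

(* Away from the root-to-v1 chain of T every vertex hangs below a unique chain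
   vertex a_j, the root of its component T^(a_j) in the v1-decomposition.  T is a
   splice with V(T1) = V1 exactly when every component T^(a_j) lies entirely
   inside or entirely outside V1.  Since a pi-increasing tree puts each block in
   the same component as its maximum, and G_v1(T) links that block to the block of
   the component's root, this condition says that the blocks of V1 are closed
   under the edges of G_v1(T).  When it holds, T1 and T2 can only be the
   restrictions of T to V1 and to its complement, with the chain relinked along
   its own order, and v2 is the largest chain vertex outside V1. *)

From mathcomp Require Import all_boot.
Set Implicit Arguments. Unset Strict Implicit. Unset Printing Implicit Defensive.

Section Trees.
Variable n : nat.
Implicit Types (T : tree n) (x y z a u v : 'I_n) (D S W : {set 'I_n}).

Lemma ord_ltn_ind (Q : 'I_n -> Prop) :
  (forall x, (forall y, y < x -> Q y) -> Q x) -> forall x, Q x.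
Proof.
move=> IH; suff Qk k x : val x = k -> Q x by move=> x; apply: (Qk x).
elim/ltn_ind: k x => k IHk x xk; apply: IH => y.
by rewrite xk => /IHk; apply.
Qed.

Lemma omaxP S y : omax S = Some y -> y \in S /\ forall z, z \in S -> z <= y.
Proof.
rewrite /omax; case: pickP => // z /andP[zS /forallP zmax] [<-].
by split=> // w wS; have := zmax w; rewrite wS.
Qed.

Lemma omax_neq0 S : S != set0 -> exists y, omax S = Some y.
Proof.
case/set0Pn=> y0 y0S; rewrite /omax; case: pickP => [z _|none]; first by exists z.
have [i iS imax] := @arg_maxnP _ y0 (mem S) val y0S.
have := none i; rewrite inE in iS; rewrite iS /=; move/negbT/negP; case.
by apply/forall_inP => z zS; apply: imax.
Qed.

Lemma omax_eq S y : y \in S -> (forall z, z \in S -> z <= y) -> omax S = Some y.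
Proof.
move=> yS ymax; have [z Sz] : exists z, omax S = Some z.
  by apply: omax_neq0; apply/set0Pn; exists y.
have [zS zmax] := omaxP Sz; rewrite Sz; congr Some; apply/val_inj/eqP.
by rewrite eqn_leq ymax // zmax.
Qed.

Lemma omax_None S : omax S = None -> S = set0.
Proof. by move=> S0; apply/eqP; apply: contraT => /omax_neq0 [y]; rewrite S0. Qed.

Lemma pred_inP D x u : pred_in D x = Some u ->
  [/\ u \in D, u < x & forall y, y \in D -> y < x -> y <= u].
Proof.
move/omaxP=> []; rewrite inE => /andP[uD ux] umax; split=> // y yD yx.
by apply: umax; rewrite inE yD.
Qed.

Lemma pred_in_None D x : pred_in D x = None -> forall y, y \in D -> x <= y.
Proof.
move/omax_None=> D0 y yD; rewrite leqNgt; apply/negP=> yx.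
by have := in_set0 y; rewrite -D0 inE yD yx.
Qed.

Lemma ancE T a x :
  anc T a x = (a == x) || (if par T x is Some u then anc T a u else false).
Proof.
apply/idP/idP.
  case/connectP=> [[_ ->|y p]]; first by rewrite eqxx.
  by rewrite /= => /andP[/eqP -> p_path] ->; apply/orP; right; apply/connectP; exists p.
case/orP=> [/eqP ->|]; first exact: connect0.
case E: (par T x) => [u|] // au.
by apply: connect_trans au; apply: connect1; rewrite /= E.
Qed.

Lemma anc_refl T x : anc T x x.
Proof. exact: connect0. Qed.

Lemma anc_trans T a b c : anc T a b -> anc T b c -> anc T a c.
Proof. by move=> ab bc; apply: connect_trans bc ab. Qed.

Lemma par_anc T x u : par T x = Some u -> anc T u x.
Proof. by move=> E; rewrite ancE E anc_refl orbT. Qed.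

Definition increasing_par T := forall v u, par T v = Some u -> u < v.

Section IncreasingPar.
Variable T : tree n.
Hypothesis incT : increasing_par T.

Lemma anc_leq a x : anc T a x -> a <= x.
Proof.
elim/ord_ltn_ind: x => x IH; rewrite ancE; case/orP=> [/eqP-> //|].
case E: (par T x) => [u|] // au.
exact: leq_trans (IH u (incT E) au) (ltnW (incT E)).
Qed.

Lemma anc_total a b x : anc T a x -> anc T b x -> anc T a b || anc T b a.
Proof.
elim/ord_ltn_ind: x => x IH; rewrite (ancE _ a).
case/orP=> [/eqP-> ->|ax]; first by rewrite orbT.
rewrite ancE; case/orP=> [/eqP bx|]; first by subst b; rewrite ancE ax orbT.
by move: ax; case E: (par T x) => [u|] // au bu; apply: (IH u (incT E)).
Qed.

Lemma par_chain v x : anc T x v -> par T x = pred_in (chain T v) x.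
Proof.
move=> xv; case E: (par T x) => [u|]; last first.
  case E2: (pred_in _ x) => [z|] //; have [] := pred_inP E2; rewrite inE => zv zx _.
  case/orP: (anc_total zv xv) => [|/anc_leq]; last by rewrite leqNgt zx.
  by rewrite ancE E orbF => /eqP zx'; rewrite zx' ltnn in zx.
symmetry; apply: omax_eq.
  by rewrite !inE (incT E) andbT (anc_trans (par_anc E) xv).
move=> z; rewrite !inE => /andP[zv zx].
case/orP: (anc_total zv xv) => [|/anc_leq]; last by rewrite leqNgt zx.
rewrite ancE E; case/orP=> [/eqP zx'|/anc_leq //].
by rewrite zx' ltnn in zx.
Qed.

End IncreasingPar.

Lemma anc_pred_in T D x a : (forall y, y \in D -> par T y = pred_in D y) ->
  x \in D -> anc T a x = (a \in D) && (a <= x).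
Proof.
move=> parD; elim/ord_ltn_ind: x => x IH xD; rewrite ancE parD //.
case E: (pred_in D x) => [u|]; last first.
  rewrite orbF; apply/eqP/andP => [->|[aD ax]]; first by rewrite xD leqnn.
  by apply/val_inj/eqP; rewrite eqn_leq ax (pred_in_None E).
have [uD ux umax] := pred_inP E; rewrite IH //; apply/idP/andP.
  case/orP=> [/eqP->|/andP[aD au]]; first by rewrite xD leqnn.
  by rewrite aD (leq_trans au (ltnW ux)).
case=> aD; rewrite leq_eqVlt => /orP[/eqP ax|ax]; last by rewrite aD umax ?orbT.
by rewrite (_ : a = x) ?eqxx //; apply: val_inj.
Qed.

Lemma eq_tree T T' : verts T = verts T' -> par T =1 par T' -> T = T'.
Proof. by case: T T' => [V f] [V' f'] /= -> ff'; congr pair; apply/ffunP. Qed.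

Lemma par_splice T1 v1 T2 v2 x : par (splice T1 v1 T2 v2) x =
  let C := chain T1 v1 :|: chain T2 v2 in
  if x \in C then pred_in C x else if x \in verts T1 then par T1 x else par T2 x.
Proof. by rewrite /par /= ffunE. Qed.

Lemma chain_splice T1 v1 T2 v2 : increasing_par T1 -> increasing_par T2 ->
  v2 < v1 -> chain (splice T1 v1 T2 v2) v1 = chain T1 v1 :|: chain T2 v2.
Proof.
move=> inc1 inc2 v21; set C := _ :|: _.
have parC y : y \in C -> par (splice T1 v1 T2 v2) y = pred_in C y.
  by move=> yC; rewrite par_splice /= yC.
have v1C : v1 \in C by rewrite !inE anc_refl.
apply/setP=> a; rewrite [in LHS]inE (anc_pred_in _ parC v1C).
case: (boolP (a \in C)) => //=; rewrite !inE => /orP[/(anc_leq inc1) //|a2].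
exact: leq_trans (anc_leq inc2 a2) (ltnW v21).
Qed.

Section IncreasingTree.
Variable T : tree n.
Hypothesis itT : is_itree T.

Lemma itree_increasing : increasing_par T.
Proof. by case: itT => _ _ parT _ v u /parT []. Qed.

Lemma par_verts x u : par T x = Some u -> x \in verts T /\ u \in verts T.
Proof. by case: itT => _ _ parT _ /parT []. Qed.

Lemma par_notin x : x \notin verts T -> par T x = None.
Proof.
move=> xT; case E: (par T x) => [u|] //.
by have [xT' _] := par_verts E; rewrite xT' in xT.
Qed.

Lemma anc_verts a x : x \in verts T -> anc T a x -> a \in verts T.
Proof.
elim/ord_ltn_ind: x => x IH xT; rewrite ancE; case/orP=> [/eqP-> //|].
case E: (par T x) => [u|] // au; have [_ uT] := par_verts E.
exact: IH (itree_increasing E) uT au.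
Qed.

Lemma root_anc rt y : rt \in verts T -> par T rt = None -> y \in verts T ->
  anc T rt y.
Proof.
move=> rtT rtN; elim/ord_ltn_ind: y => y IH yT; rewrite ancE.
case E: (par T y) => [u|].
  by have [_ uT] := par_verts E; rewrite IH ?orbT // (itree_increasing E).
by case: itT => _ _ _ /(_ rt y rtT yT rtN E) ->; rewrite eqxx.
Qed.

Lemma root_exists : exists2 rt, rt \in verts T & par T rt = None.
Proof.
case: itT => /set0Pn [x xT] _ _ _; elim/ord_ltn_ind: x xT => x IH xT.
case E: (par T x) => [u|]; last by exists x.
by have [_ uT] := par_verts E; apply: IH (itree_increasing E) uT.
Qed.

Variable v : 'I_n.
Hypothesis vT : v \in verts T.

Let common_anc x := [set a | anc T a x && anc T a v].

Lemma omax_chainroot x : x \in verts T -> omax (common_anc x) = Some (chainroot T v x).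
Proof.
move=> xT; have [rt rtT rtN] := root_exists.
have [y Ey] : exists y, omax (common_anc x) = Some y.
  by apply: omax_neq0; apply/set0Pn; exists rt; rewrite inE !root_anc.
by rewrite /chainroot -/(common_anc x) Ey.
Qed.

Lemma chainroot_anc x : x \in verts T ->
  anc T (chainroot T v x) x /\ anc T (chainroot T v x) v.
Proof. by move=> /omax_chainroot /omaxP []; rewrite inE => /andP[]. Qed.

Lemma chainroot_verts x : x \in verts T -> chainroot T v x \in verts T.
Proof. by move=> /chainroot_anc [_]; apply: anc_verts. Qed.

Lemma chainroot_id u : anc T u v -> chainroot T v u = u.
Proof.
move=> uv; rewrite /chainroot (@omax_eq _ u) ?inE ?anc_refl ?uv //.
by move=> z; rewrite inE => /andP[/(anc_leq itree_increasing)].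
Qed.

Lemma chainroot_common_anc x y : x \in verts T -> y \in verts T ->
  common_anc x = common_anc y -> chainroot T v x = chainroot T v y.
Proof.
by move=> xT yT E; apply: Some_inj; rewrite -!omax_chainroot // E.
Qed.

Lemma chainroot_par x u : ~~ anc T x v -> par T x = Some u ->
  chainroot T v x = chainroot T v u.
Proof.
move=> xv E; have [xT uT] := par_verts E; apply: chainroot_common_anc => //.
apply/setP=> a; rewrite !inE (ancE _ a x) E.
by case: eqP => //= ->; rewrite (negbTE xv) !andbF.
Qed.

Lemma chainroot_desc x m : x \in verts T -> m \in verts T -> anc T x m ->
  ~~ anc T x v -> chainroot T v m = chainroot T v x.
Proof.
move=> xT mT xm xv; apply: chainroot_common_anc => //; apply/setP=> a.
rewrite !inE; apply/andP/andP => -[am av]; split=> //; last exact: anc_trans xm.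
case/orP: (anc_total itree_increasing am xm) => // xa.
by rewrite (anc_trans xa av) in xv.
Qed.

End IncreasingTree.

Section Blocks.
Variable P : {set {set 'I_n}}.
Hypothesis tP : trivIset P.
Implicit Types (B : {set 'I_n}) (U : {set 'I_n}).

Lemma mem_cover_block (Sb : {set {set 'I_n}}) B x : Sb \subset P ->
  B \in P -> x \in B -> (x \in cover Sb) = (B \in Sb).
Proof.
move=> SbP BP xB; apply/bigcupP/idP => [[B' B'S xB']|BS]; last by exists B.
by rewrite -(def_pblock tP BP xB) (def_pblock tP (subsetP SbP _ B'S) xB').
Qed.

Lemma mem_union_of_blocks U B x : union_of_blocks P U ->
  B \in P -> x \in B -> (x \in U) = (B \subset U).
Proof.
move=> [Sb [SbP ->]] BP xB; apply/idP/idP; last by move/subsetP; apply.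
rewrite (mem_cover_block SbP BP xB) => BS.
by apply/subsetP=> y yB; apply/bigcupP; exists B.
Qed.

Lemma union_of_blocks_sub U : union_of_blocks P U -> U \subset cover P.
Proof.
case=> Sb [SbP ->]; apply/subsetP=> x /bigcupP [B BS xB].
by apply/bigcupP; exists B => //; apply: (subsetP SbP).
Qed.

Lemma union_of_blocksE U : union_of_blocks P U -> U = cover (blocks_in P U).
Proof.
move=> uU; apply/setP=> x; apply/idP/bigcupP => [xU|[B]]; last first.
  by rewrite inE => /andP[_ /subsetP]; apply.
have xP := subsetP (union_of_blocks_sub uU) x xU.
have xB : x \in pblock P x by rewrite mem_pblock.
exists (pblock P x) => //.
by rewrite inE pblock_mem //= -(mem_union_of_blocks uU (pblock_mem xP) xB).
Qed.

Lemma union_of_blocksD U U' : union_of_blocks P U -> union_of_blocks P U' ->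
  union_of_blocks P (U :\: U').
Proof.
move=> uU uU'; exists (blocks_in P (U :\: U')); split.
  by apply/subsetP=> B; rewrite inE => /andP[].
apply/setP=> x; apply/idP/bigcupP => [|[B]]; last first.
  by rewrite inE => /andP[_ /subsetP]; apply.
rewrite inE => /andP[xU' xU]; have xP := subsetP (union_of_blocks_sub uU) x xU.
have BP := pblock_mem xP; have xB : x \in pblock P x by rewrite mem_pblock.
exists (pblock P x) => //; rewrite inE BP; apply/subsetP=> y yB.
rewrite inE (mem_union_of_blocks uU' BP yB) -(mem_union_of_blocks uU' BP xB) xU'.
by rewrite (mem_union_of_blocks uU BP yB) -(mem_union_of_blocks uU BP xB).
Qed.

End Blocks.

Section Splitting.
Variable P : {set {set 'I_n}}.
Hypothesis tP : trivIset P.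
Variable T : tree n.
Hypothesis pT : pi_increasing P T.
Variable v1 : 'I_n.
Hypothesis v1T : v1 \in verts T.

Let itT : is_itree T. Proof. by case: pT. Qed.
Let incT : increasing_par T. Proof. exact: itree_increasing. Qed.
Let ubT : union_of_blocks P (verts T). Proof. by case: pT. Qed.
Let pincT : forall B, B \in P -> B \subset verts T ->
  forall i j, i \in B -> j \in B -> i < j -> anc T i j.
Proof. by case: pT. Qed.

Definition par_closed W := forall x u, x \in verts T -> ~~ anc T x v1 ->
  par T x = Some u -> (x \in W) = (u \in W).

Definition branch_closed W := forall x, x \in verts T -> ~~ anc T x v1 ->
  (x \in W) = (chainroot T v1 x \in W).

Lemma off_chain_par x : x \in verts T -> ~~ anc T x v1 -> exists u, par T x = Some u.
Proof.
move=> xT xv; case E: (par T x) => [u|]; first by exists u.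
by rewrite (root_anc itT xT E v1T) in xv.
Qed.

Lemma par_closedP W : par_closed W <-> branch_closed W.
Proof.
split=> [Wcl | Wcl x u xT xv E]; last first.
  have [_ uT] := par_verts itT E; rewrite (Wcl x xT xv) (chainroot_par itT v1T xv E).
  by case: (boolP (anc T u v1)) => [/(chainroot_id itT) -> | uv]; rewrite -?Wcl.
elim/ord_ltn_ind=> x IH xT xv; have [u E] := off_chain_par xT xv.
have [_ uT] := par_verts itT E.
rewrite (Wcl _ _ xT xv E) (chainroot_par itT v1T xv E).
case: (boolP (anc T u v1)) => [/(chainroot_id itT) -> // | uv].
exact: IH (incT E) uT uv.
Qed.

Lemma branch_closed_components W : union_of_blocks P W -> W \subset verts T ->
  branch_closed W -> union_of_components P T v1 (blocks_in P W).
Proof.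
move=> uW WT Wcl; split.
  by apply/subsetP=> B; rewrite !inE => /andP[-> /subset_trans]; apply.
suff Wcl' : closed (dep_uedge P T v1) (blocks_in P W).
  by move=> B B' BW /(closed_connect Wcl') <-.
suff edge_cl X Y : dep_edge P T v1 X Y -> (X \in blocks_in P W) = (Y \in blocks_in P W).
  by move=> X Y /orP[/edge_cl | /edge_cl ->].
rewrite /dep_edge !inE => /and3P[/andP[XP XT] /andP[YP _]].
case E: (omax X) => [m|] // /andP[mv /eqP ->]; have [mX _] := omaxP E.
have mT : m \in verts T := subsetP XT m mX.
have cT := chainroot_verts itT v1T mT.
have cP := subsetP (union_of_blocks_sub ubT) _ cT.
have cB : chainroot T v1 m \in pblock P (chainroot T v1 m) by rewrite mem_pblock.
rewrite inE in mv; rewrite XP pblock_mem //= -(mem_union_of_blocks tP uW XP mX).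
by rewrite (Wcl m mT mv) (mem_union_of_blocks tP uW (pblock_mem cP) cB).
Qed.

(* The maximum m of the block of x descends from x, so the edge of G_v1(T)
   leaving that block points to the block of chainroot x. *)
Lemma components_branch_closed Sb : union_of_components P T v1 Sb ->
  branch_closed (cover Sb).
Proof.
case=> SbT Sbcl x xT xv; have xP := subsetP (union_of_blocks_sub ubT) x xT.
set B := pblock P x; have BP : B \in P := pblock_mem xP.
have xB : x \in B by rewrite mem_pblock.
have BT : B \subset verts T by rewrite -(mem_union_of_blocks tP ubT BP xB).
have [m E] : exists m, omax B = Some m by apply: omax_neq0; apply/set0Pn; exists x.
have [mB mmax] := omaxP E; have mT : m \in verts T := subsetP BT m mB.
have xm : anc T x m.
  have [<- | xm] := eqVneq x m; first exact: anc_refl.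
  by apply: (pincT BP BT xB mB); rewrite ltn_neqAle mmax // andbT val_eqE xm.
have mv : ~~ anc T m v1 by apply: contra xv; apply: anc_trans xm.
set c := chainroot T v1 m; have cT : c \in verts T := chainroot_verts itT v1T mT.
have cP := subsetP (union_of_blocks_sub ubT) c cT.
set B' := pblock P c; have B'P : B' \in P := pblock_mem cP.
have cB' : c \in B' by rewrite mem_pblock.
have SbP : Sb \subset P.
  by apply/subsetP=> Z /(subsetP SbT); rewrite inE => /andP[].
have BB' : dep_edge P T v1 B B'.
  rewrite /dep_edge !inE BP BT B'P E inE mv eqxx /=.
  by rewrite andbT -(mem_union_of_blocks tP ubT B'P cB').
rewrite (mem_cover_block tP SbP BP xB) -(chainroot_desc itT v1T xT mT xm xv).
rewrite (mem_cover_block tP SbP B'P cB'); apply/idP/idP => [BS|B'S].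
  by apply: (Sbcl B) => //; apply: connect1; rewrite /dep_uedge BB'.
by apply: (Sbcl B') => //; apply: connect1; rewrite /dep_uedge BB' orbT.
Qed.

Definition restrict_tree W : tree n :=
  (W, [ffun x => if x \in W then
        if x \in chain T v1 then pred_in (chain T v1 :&: W) x else par T x
      else None]).

Section Restrict.
Variable W : {set 'I_n}.
Hypotheses (WT : W \subset verts T) (Wcl : par_closed W).

Lemma par_restrict x : par (restrict_tree W) x =
  if x \in W then
    if x \in chain T v1 then pred_in (chain T v1 :&: W) x else par T x
  else None.
Proof. by rewrite /par /= ffunE. Qed.

Lemma chain_meet_neq0 : W != set0 -> chain T v1 :&: W != set0.
Proof.
case/set0Pn=> x; elim/ord_ltn_ind: x => x IH xW; have xT := subsetP WT x xW.
case: (boolP (anc T x v1)) => xv; first by apply/set0Pn; exists x; rewrite !inE xv.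
have [u E] := off_chain_par xT xv.
by apply: (IH u (incT E)); rewrite -(Wcl xT xv E).
Qed.

Lemma restrict_itree : W != set0 -> is_itree (restrict_tree W).
Proof.
move=> W0; case: itT => _ posT _ _; split=> //.
- by move=> v vW; apply/posT/(subsetP WT).
- move=> v u; rewrite par_restrict; case: ifP => // vW; case: ifP => vv E.
    by have [] := pred_inP E; rewrite inE => /andP[_ ->] ->.
  have vT := subsetP WT v vW; rewrite inE in vv.
  by rewrite /verts /= -(Wcl vT (negbT vv) E) vW (incT E).
have root_chain v : v \in W -> par (restrict_tree W) v = None ->
    v \in chain T v1 :&: W /\ pred_in (chain T v1 :&: W) v = None.
  move=> vW; rewrite par_restrict vW; case: ifP => vv; first by rewrite inE vv vW.
  have vT := subsetP WT v vW; rewrite inE in vv.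
  by have [u ->] := off_chain_par vT (negbT vv).
move=> v w vW wW /(root_chain _ vW) [vC vN] /(root_chain _ wW) [wC wN].
by apply/val_inj/eqP; rewrite eqn_leq (pred_in_None vN) // (pred_in_None wN).
Qed.

Lemma anc_restrict_chain x a : x \in chain T v1 :&: W ->
  anc (restrict_tree W) a x = (a \in chain T v1 :&: W) && (a <= x).
Proof.
by apply: anc_pred_in => y; rewrite inE par_restrict => /andP[-> ->].
Qed.

Lemma anc_restrict x a : x \in W -> a \in W -> anc T a x -> anc (restrict_tree W) a x.
Proof.
elim/ord_ltn_ind: x => x IH xW aW; rewrite ancE; case/orP=> [/eqP-> |].
  exact: anc_refl.
case E: (par T x) => [u|] // au; have xT := subsetP WT x xW.
case: (boolP (anc T x v1)) => xv.
  rewrite anc_restrict_chain ?inE ?xv // aW (anc_trans au (anc_trans (par_anc E) xv)).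
  exact: leq_trans (anc_leq incT au) (ltnW (incT E)).
have uW : u \in W by rewrite -(Wcl xT xv E).
apply: anc_trans (IH u (incT E) uW aW au) (par_anc _).
by rewrite par_restrict xW inE (negbTE xv).
Qed.

Lemma restrict_pi_increasing : W != set0 -> union_of_blocks P W ->
  pi_increasing P (restrict_tree W).
Proof.
move=> W0 uW; split=> [|//|B BP BW i j iB jB ij]; first exact: restrict_itree.
apply: anc_restrict (subsetP BW j jB) (subsetP BW i iB) _.
exact: pincT BP (subset_trans BW WT) i j iB jB ij.
Qed.

Lemma chain_restrict w : omax (chain T v1 :&: W) = Some w ->
  chain (restrict_tree W) w = chain T v1 :&: W.
Proof.
move=> /omaxP [wC wmax]; apply/setP=> a; rewrite [in LHS]inE anc_restrict_chain //.
by case: (boolP (a \in _)) => //= /wmax ->.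
Qed.

End Restrict.

Lemma splice_restrict (V1 : {set 'I_n}) : V1 \proper verts T -> union_of_blocks P V1 ->
  v1 \in V1 -> par_closed V1 -> exists T1 T2 v2, spl_decomp P T V1 v1 T1 T2 v2.
Proof.
move=> V1T uV1 v1V1 V1cl; have V1T' := proper_sub V1T.
set V2 := verts T :\: V1.
have V2cl : par_closed V2.
  move=> x u xT xv E; have [_ uT] := par_verts itT E.
  by rewrite !inE xT uT (V1cl _ _ xT xv E).
have V2T : V2 \subset verts T := subsetDl _ _.
have V20 : V2 != set0.
  by case/properP: V1T => _ [x xT xV1]; apply/set0Pn; exists x; rewrite inE xV1.
have V10 : V1 != set0 by apply/set0Pn; exists v1.
have [v2 Ev2] := omax_neq0 (chain_meet_neq0 V2T V2cl V20).
have Ev1 : omax (chain T v1 :&: V1) = Some v1.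
  apply: omax_eq => [|z]; first by rewrite !inE anc_refl v1V1.
  by rewrite !inE => /andP[/(anc_leq incT)].
have [v2C _] := omaxP Ev2; move: v2C; rewrite !inE => /andP[v2v /andP[v2V1 v2T]].
exists (restrict_tree V1), (restrict_tree V2), v2; split.
- by split; apply: restrict_pi_increasing => //; apply: union_of_blocksD.
- by [].
- by rewrite /verts /= inE v2V1.
- rewrite ltn_neqAle (anc_leq incT v2v) andbT.
  by apply: contra v2V1 => /eqP/val_inj ->.
apply: eq_tree => [|x].
  by apply/setP=> x; rewrite /verts /= !inE; case: (boolP (x \in V1)) => // /(subsetP V1T').
have chainE : chain T v1 :&: V1 :|: chain T v1 :&: V2 = chain T v1.
  apply/setP=> a; rewrite !inE; case: (boolP (anc T a v1)) => //= av.
  by rewrite (anc_verts itT v1T av) andbT orbN.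
rewrite par_splice /= (chain_restrict Ev1) (chain_restrict Ev2) chainE.
case: ifP => [xv|xv]; first by rewrite inE in xv; apply: par_chain.
rewrite /verts /=; case: ifP => xV1; first by rewrite par_restrict xV1 xv.
rewrite par_restrict xv; case: ifP => // /negbT; rewrite inE xV1 /=.
exact: par_notin.
Qed.

Lemma restrict_treeE (W : {set 'I_n}) T' v' : is_itree T' -> verts T' = W ->
  chain T' v' = chain T v1 :&: W ->
  (forall x, x \in W -> x \notin chain T v1 -> par T' x = par T x) ->
  T' = restrict_tree W.
Proof.
move=> itT' T'W chainT' parT'; apply: eq_tree => // x; rewrite par_restrict.
case: ifP => [xW|]; last by rewrite -T'W => /negbT/(par_notin itT').
case: ifP => [xv|/negbT]; last exact: parT'.
have : x \in chain T' v' by rewrite chainT' inE xv.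
rewrite inE => xv'.
by rewrite -chainT' (par_chain (itree_increasing itT') xv').
Qed.

Section Decomposition.
Variables (V1 : {set 'I_n}) (T1 T2 : tree n) (v2 : 'I_n).
Hypotheses (dec : spl_decomp P T V1 v1 T1 T2 v2) (v1V1 : v1 \in V1).

Let itT1 : is_itree T1. Proof. by case: dec => [[[]]]. Qed.
Let itT2 : is_itree T2. Proof. by case: dec => [[_ []]]. Qed.
Let T1V1 : verts T1 = V1. Proof. by case: dec => _ []. Qed.
Let T2V2 : verts T2 = verts T :\: V1. Proof. by case: dec => _ []. Qed.
Let v2T2 : v2 \in verts T2. Proof. by case: dec. Qed.
Let chainT : chain T v1 = chain T1 v1 :|: chain T2 v2.
Proof.
by case: dec => _ _ _ v21 ->; apply: chain_splice => //; apply: itree_increasing.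
Qed.

Lemma par_spl_decomp x : x \notin chain T v1 ->
  par T x = if x \in V1 then par T1 x else par T2 x.
Proof.
by case: dec => _ [<- _] _ _ ET xv; rewrite ET par_splice /= -chainT (negbTE xv).
Qed.

Lemma chain_spl_decomp1 : chain T1 v1 = chain T v1 :&: V1.
Proof.
apply/setP=> a; rewrite chainT !inE; case: (boolP (anc T1 a v1)) => [a1|_] /=.
  by rewrite -T1V1 (anc_verts itT1 _ a1) ?T1V1.
apply/esym/andP => -[a2 aV1]; have := anc_verts itT2 v2T2 a2.
by rewrite T2V2 inE aV1.
Qed.

Lemma chain_spl_decomp2 : chain T2 v2 = chain T v1 :&: (verts T :\: V1).
Proof.
apply/setP=> a; rewrite chainT !inE; case: (boolP (anc T2 a v2)) => [a2|_] /=.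
  by have := anc_verts itT2 v2T2 a2; rewrite T2V2 inE orbT => ->.
rewrite orbF; case: (boolP (anc T1 a v1)) => //= a1.
by have := anc_verts itT1 _ a1; rewrite T1V1 => /(_ v1V1) ->.
Qed.

Lemma spl_decomp_par_closed : par_closed V1.
Proof.
move=> x u xT xv E; move: (E); rewrite par_spl_decomp ?inE //.
case: ifP => xV1 Eu.
  by have [_] := par_verts itT1 Eu; rewrite T1V1 => ->.
by have [_] := par_verts itT2 Eu; rewrite T2V2 inE => /andP[/negbTE ->].
Qed.

Lemma spl_decomp_restrict : [/\ T1 = restrict_tree V1,
  T2 = restrict_tree (verts T :\: V1) &
  omax (chain T v1 :&: (verts T :\: V1)) = Some v2].
Proof.
split.
- apply: restrict_treeE chain_spl_decomp1 _ => // x xV1 xv.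
  by rewrite par_spl_decomp // xV1.
- apply: restrict_treeE chain_spl_decomp2 _ => // x; rewrite inE => /andP[xV1 _] xv.
  by rewrite par_spl_decomp // (negbTE xV1).
rewrite -chain_spl_decomp2; apply: omax_eq => [|z]; first by rewrite inE anc_refl.
by rewrite inE => /(anc_leq (itree_increasing itT2)).
Qed.

End Decomposition.

End Splitting.
End Trees.

Theorem lemma3p9 (r : nat) (P : {set {set 'I_r.+1}}) (T : tree r.+1)
    (V1 : {set 'I_r.+1}) (v1 : 'I_r.+1) :
  2 <= r ->
  partition P [set i : 'I_r.+1 | 0 < i] ->
  [set (inord 1 : 'I_r.+1)] \in P ->
  pi_increasing P T ->
  V1 \proper verts T -> V1 != set0 -> union_of_blocks P V1 -> v1 \in V1 ->
  ((exists (T1 T2 : tree r.+1) (v2 : 'I_r.+1), spl_decomp P T V1 v1 T1 T2 v2)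
   <-> (exists S, union_of_components P T v1 S /\ V1 = cover S))
  /\ (forall (T1 T2 T1' T2' : tree r.+1) (v2 v2' : 'I_r.+1),
      spl_decomp P T V1 v1 T1 T2 v2 ->
      spl_decomp P T V1 v1 T1' T2' v2' ->
      [/\ T1 = T1', T2 = T2' & v2 = v2']).
Proof.
move=> _ /and3P[_ tP _] _ pT V1T _ uV1 v1V1.
have v1T : v1 \in verts T := subsetP (proper_sub V1T) v1 v1V1.
split; first split.
- case=> T1 [T2 [v2 dec]]; exists (blocks_in P V1); split; last exact: union_of_blocksE.
  apply: branch_closed_components (proper_sub V1T) _ => //.
  exact/(par_closedP pT v1T)/(spl_decomp_par_closed dec).
- case=> Sb [Sbc V1E]; apply: splice_restrict => //; rewrite V1E.
  exact/(par_closedP pT v1T)/(components_branch_closed tP pT v1T Sbc).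
move=> T1 T2 T1' T2' v2 v2' dec dec'.
have [-> -> Ev2] := spl_decomp_restrict dec v1V1.
have [-> -> Ev2'] := spl_decomp_restrict dec' v1V1.
by split=> //; apply: Some_inj; rewrite -Ev2 -Ev2'.
Qed.
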